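(* Let $\mathcal{H}$ be a collection of nonempty loopless graphs, each with an even number of edges. Let $n,m\geq 2$ be integers with $n\geq 4^m$, and let $\mathcal{G}\subseteq\mathbb{F}_2^{\binom{[n]}{2}}$ be an $\mathcal{H}$-code with $\mathbb{P}[\mathcal{G}]=\delta_n(\mathcal{H})$. Then $$\big\|\widehat{\big(\mathbb{1}_{\mathcal{G}}-\mathbb{P}[\mathcal{G}]\big)}\big\|_{\ell_\infty}\leq\delta_m(\mathcal{H})-\delta_n(\mathcal{H}).$$
   Context: Graphs: for a nonempty finite set $V$, $\binom{V}{\leq 2}$ denotes the nonempty subsets of $V$ of size at most 2 and $\binom{V}{2}$ those of size 2. A graph on $V$ is a subset of $\binom{V}{\leq 2}$ (size-2 elements are edges, size-1 elements self-loops); loopless means no self-loops. $V(G)$ is the union of members of $G$. Graphs $G,H$ are isomorphic if there is a bijection $\phi\colon V(G)\to V(H)$ with $\{x,y\}\in G\iff\{\phi(x),\phi(y)\}\in H$ for all $x,y\in V(G)$. $G_1+G_2$ is symmetric difference. Loopless graphs on $[n]$ are identified with $\mathbb{F}_2^{\binom{[n]}{2}}$; $\mathbb{P}$ is the uniform probability measure there. An $\mathcal{H}$-code is a family $\mathcal{G}$ of graphs on a common vertex set such that $G_1+G_2$ is not isomorphic to any graph of $\mathcal{H}$ for all $G_1,G_2\in\mathcal{G}$; $\delta_n(\mathcal{H})$ is the maximum density $\mathbb{P}[\mathcal{G}]$ of an $\mathcal{H}$-code $\mathcal{G}\subseteq\mathbb{F}_2^{\binom{[n]}{2}}$. Fourier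 transform on $\mathbb{F}_2^{\mathcal{I}}$: $\widehat f(\xi)=\mathbb{E}_x[f(x)(-1)^{|x\cap\xi|}]$ (expectation w.r.t. uniform measure), and $\|\widehat f\|_{\ell_\infty}=\max_\xi|\widehat f(\xi)|$. *)

From HB Require Import structures.
From mathcomp Require Import all_boot all_order all_algebra.
From mathcomp Require Import boolp.
Set Implicit Arguments. Unset Strict Implicit. Unset Printing Implicit Defensive.
Import Order.TTheory GRing.Theory Num.Theory.
Local Open Scope ring_scope.

Definition edge (n : nat) := {e : {set 'I_n} | #|e| == 2%N}.

(* Loopless graphs on [n] = elements of F_2^{binom([n],2)} = sets of edges. *)
Definition graph (n : nat) := {set edge n}.

Definition vtx (n : nat) (G : graph n) : {set 'I_n} :=
  \bigcup_(e in G) val e.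

(* {x,y} in G  (false when x = y, since edges have size 2). *)
Definition adj (n : nat) (G : graph n) (x y : 'I_n) : bool :=
  [exists e in G, val e == [set x; y]].

Definition gsum (n : nat) (G1 G2 : graph n) : graph n :=
  (G1 :\: G2) :|: (G2 :\: G1).

Definition giso (n k : nat) (G : graph n) (H : graph k) : Prop :=
  exists f : 'I_n -> 'I_k,
    {in vtx G &, injective f} /\ f @: vtx G = vtx H /\
    (forall x y, x \in vtx G -> y \in vtx G -> adj G x y = adj H (f x) (f y)).

Definition gcoll := forall k : nat, graph k -> Prop.

Definition is_code (Hc : gcoll) (n : nat) (Gs : {set graph n}) : Prop :=
  forall G1 G2, G1 \in Gs -> G2 \in Gs ->
    forall k (H : graph k), Hc k H -> ~ giso (gsum G1 G2) H.

Definition density (n : nat) (Gs : {set graph n}) : rat :=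
  #|Gs|%:R / #|{: graph n}|%:R.

(* delta_n(H): maximum density of an H-code (the empty family is a code). *)
Definition delta (Hc : gcoll) (n : nat) : rat :=
  (\max_(Gs : {set graph n} | `[< is_code Hc Gs >]) #|Gs|)%:R
    / #|{: graph n}|%:R.

Definition fourier (n : nat) (f : graph n -> rat) (xi : graph n) : rat :=
  (\sum_(x : graph n) f x * (-1) ^+ #|x :&: xi|) / #|{: graph n}|%:R.

Definition linf (n : nat) (F : graph n -> rat) : rat :=
  \big[Num.max/0]_(xi : graph n) `|F xi|.

(* Fix a nonzero frequency xi.  Since n >= 4^m, Ramsey's theorem gives m vertices forming
   a clique or an independent set of xi; relabelling graphs on [m] onto them yields a
   subgroup U (the even graphs, resp. all graphs) on which the character
   chi_xi(x) = (-1)^|x cap xi| is 1.  For every x, the graphs u in U with x + u in G pull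
   back to an H-code on [m]: in the clique case, adding a fixed edge to half of it doubles
   it into a code on all graphs, because an odd graph is never isomorphic to a member of
   H.  Hence each translate x + U meets G in at most delta_m |U| points, and averaging
   chi_xi over these translates bounds |sum_{x in G} chi_xi(x)| by delta_m 2^N - |G|.
   The coefficient at xi = 0 vanishes because the indicator is centred. *)

From HB Require Import structures.
From mathcomp Require Import all_boot all_order all_algebra.
From mathcomp Require Import boolp.
From mathcomp Require Import zify lra.
Import Order.TTheory GRing.Theory Num.Theory.
Set Implicit Arguments. Unset Strict Implicit. Unset Printing Implicit Defensive.

Section Ramsey.
Variable T : finType.

Definition clique (r : rel T) (S : {set T}) := {in S &, forall x y, x != y -> r x y}.

Lemma clique_setU1 (r : rel T) v (S : {set T}) : symmetric r ->
  (forall y, y \in S -> r v y) -> clique r S -> clique r (v |: S).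
Proof.
move=> rC rv rS x y; rewrite !inE => /predU1P[-> | xS] /predU1P[-> | yS].
- by rewrite eqxx.
- by move=> _; apply: rv.
- by move=> _; rewrite rC; apply: rv.
- exact: rS.
Qed.

Lemma ramsey_homogeneous s (r : rel T) a b (A : {set T}) : symmetric r ->
  (a + b = s)%N -> (2 ^ s <= #|A|)%N ->
  exists2 S : {set T}, S \subset A &
    (#|S| = a /\ clique r S) \/ (#|S| = b /\ clique [rel x y | ~~ r x y] S).
Proof.
have clique0 r' : clique r' set0 by move=> x y; rewrite inE.
elim: s r a b A => [|s IH] r a b A rC sab hA.
  by exists set0; [exact: sub0set | left; rewrite cards0; split; [lia | exact: clique0]].
case: a sab => [|a] sab.
  by exists set0; [exact: sub0set | left; rewrite cards0; split; last exact: clique0].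
case: b sab => [|b] sab.
  by exists set0; [exact: sub0set | right; rewrite cards0; split; last exact: clique0].
have /set0Pn [v vA] : A != set0.
  by apply: contraTneq hA => ->; rewrite cards0 -ltnNge expn_gt0.
pose nbhd (r' : rel T) := [set y in A :\ v | r' v y].
have card_nbhd : (#|nbhd r| + #|nbhd [rel x y | ~~ r x y]| = #|A| - 1)%N.
  rewrite (cardsD1 v A) vA add1n subn1 /= -(cardsID (nbhd r) (A :\ v)).
  by congr addn; apply: eq_card => y; rewrite !inE /=;
    case: (r v y); case: (y \in A); case: (y == v).
have nbhdA (r' : rel T) (S : {set T}) : S \subset nbhd r' -> S \subset A.
  by move=> /subsetP SN; apply/subsetP=> y /SN; rewrite !inE => /andP[/andP[]].
have extend (r' : rel T) (S : {set T}) : symmetric r' -> S \subset nbhd r' -> clique r' S ->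
    [/\ v |: S \subset A, #|v |: S| = #|S|.+1 & clique r' (v |: S)].
  move=> r'C /subsetP SN Sc; have vS : v \notin S by apply/negP=> /SN; rewrite !inE eqxx.
  split.
  - by rewrite subUset sub1set vA (nbhdA _ _ (introT subsetP SN)).
  - by rewrite cardsU1 vS.
  - by apply: clique_setU1 => // y /SN; rewrite inE => /andP[].
have rnC : symmetric [rel x y | ~~ r x y] by move=> x y /=; rewrite rC.
have [hN | hM] : (2 ^ s <= #|nbhd r| \/ 2 ^ s <= #|nbhd [rel x y | ~~ r x y]|)%N.
  by move: hA; rewrite expnS; lia.
- have [S SN [[cS Sc] | hS]] := IH r a b.+1 (nbhd r) rC ltac:(lia) hN.
    have [SA cvS vSc] := extend r S rC SN Sc.
    by exists (v |: S) => //; left; rewrite cvS cS.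
  by exists S; [exact: nbhdA SN | right].
- have [S SN [hS | [cS Sc]]] := IH r a.+1 b (nbhd [rel x y | ~~ r x y]) rC ltac:(lia) hM.
    by exists S; [exact: nbhdA SN | left].
  have [SA cvS vSc] := extend _ S rnC SN Sc.
  by exists (v |: S) => //; right; rewrite cvS cS.
Qed.
End Ramsey.

Lemma imset_set2 (aT rT : finType) (f : aT -> rT) x y : f @: [set x; y] = [set f x; f y].
Proof. by rewrite imsetU !imset_set1. Qed.

Lemma card_symdiff (T : finType) (A B : {set T}) :
  (#|(A :\: B) :|: (B :\: A)| + 2 * #|A :&: B| = #|A| + #|B|)%N.
Proof.
rewrite cardsU; have -> : (A :\: B) :&: (B :\: A) = set0.
  by apply/setP=> e; rewrite !inE; case: (e \in A); case: (e \in B).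
by rewrite cards0 -(cardsID B A) -(cardsID A B) [B :&: A]setIC; lia.
Qed.

Lemma odd_gsum n (G1 G2 : graph n) : odd #|gsum G1 G2| = odd #|G1| (+) odd #|G2|.
Proof. by rewrite -oddD -card_symdiff oddD oddM andFb addbF. Qed.

Lemma gsumC n (G1 G2 : graph n) : gsum G1 G2 = gsum G2 G1.
Proof. exact: setUC. Qed.

Lemma gsumK n (G : graph n) : involutive (fun H : graph n => gsum H G).
Proof. by move=> G'; apply/setP=> e; rewrite !inE; case: (e \in G'); case: (e \in G). Qed.

Lemma gsum_inj n (G : graph n) : injective (fun H : graph n => gsum H G).
Proof. exact: inv_inj (gsumK G). Qed.

Lemma gsumKC n (G G1 G2 : graph n) : gsum (gsum G G1) (gsum G G2) = gsum G1 G2.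
Proof.
by apply/setP=> e; rewrite !inE; case: (e \in G); case: (e \in G1); case: (e \in G2).
Qed.

Lemma edge_pair n (e : edge n) : exists x y, x != y /\ val e = [set x; y].
Proof. exact/cards2P/(valP e). Qed.

Lemma exists_odd_graph n : (1 < n)%N -> exists e0 : graph n, odd #|e0|.
Proof.
move=> n2; have e_card : #|[set Ordinal (ltnW n2); Ordinal n2]| == 2 by rewrite cards2.
by exists [set exist (fun A : {set 'I_n} => #|A| == 2) _ e_card]; rewrite cards1.
Qed.

Lemma edge_sub_vtx n (G : graph n) (e : edge n) : e \in G -> val e \subset vtx G.
Proof. by move=> eG; apply/subsetP=> x xe; apply/bigcupP; exists e. Qed.

Lemma adjP n (G : graph n) x y :
  reflect (exists2 e, e \in G & val e = [set x; y]) (adj G x y).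
Proof.
by apply: (iffP existsP) => [[e /andP[eG /eqP]] | [e eG /eqP]]; exists e => //; apply/andP.
Qed.

Lemma imset_inj_in (aT rT : finType) (f : aT -> rT) (D A B : {set aT}) :
  {in D &, injective f} -> A \subset D -> B \subset D -> f @: A = f @: B -> A = B.
Proof.
move=> f_inj AD BD fAB.
suff imset_subK (C C' : {set aT}) :
    C \subset D -> C' \subset D -> f @: C \subset f @: C' -> C \subset C'.
  by apply/eqP; rewrite eqEsubset (imset_subK A B) ?(imset_subK B A) ?fAB.
move=> /subsetP CD /subsetP C'D /subsetP fCC'; apply/subsetP=> x xC.
have /imsetP[y yC' fxy] := fCC' _ (imset_f f xC).
by rewrite (f_inj x y (CD x xC) (C'D y yC') fxy).
Qed.

Lemma giso_card n k (G : graph n) (H : graph k) : giso G H -> #|G| = #|H|.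
Proof.
move=> [f [f_inj [f_vtx f_adj]]].
have f_edges : [set f @: val e | e : edge n in G] = [set val e | e : edge k in H].
  apply/setP=> A; apply/imsetP/imsetP => [[e eG ->] | [e' e'H ->]].
    have [x [y [_ exy]]] := edge_pair e.
    have /subsetP eG_vtx := edge_sub_vtx eG; rewrite exy in eG_vtx.
    have /adjP[e' e'H e'xy] : adj H (f x) (f y).
      by rewrite -f_adj ?eG_vtx ?set21 ?set22 //; apply/adjP; exists e.
    by exists e' => //; rewrite exy e'xy imset_set2.
  have [x' [y' [_ exy']]] := edge_pair e'.
  have /subsetP e'H_vtx := edge_sub_vtx e'H; rewrite exy' -f_vtx in e'H_vtx.
  have /imsetP[x xG fx] := e'H_vtx x' (set21 _ _).
  have /imsetP[y yG fy] := e'H_vtx y' (set22 _ _).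
  have /adjP[e eG exy] : adj G x y by rewrite f_adj // -fx -fy; apply/adjP; exists e'.
  by exists e => //; rewrite exy' exy imset_set2 fx fy.
rewrite -(card_imset H val_inj) -f_edges card_in_imset // => e1 e2 e1G e2G.
by move=> /(imset_inj_in f_inj (edge_sub_vtx e1G) (edge_sub_vtx e2G)) /val_inj.
Qed.

Section Relabel.
Variables (m n : nat) (s : 'I_m -> 'I_n).
Hypothesis s_inj : injective s.

Lemma card_relabel_edge (e : edge m) : #|s @: val e| == 2.
Proof. by rewrite card_imset //; exact: (valP e). Qed.

Definition relabel_edge (e : edge m) : edge n :=
  exist (fun A : {set 'I_n} => #|A| == 2) _ (card_relabel_edge e).

Definition relabel (G : graph m) : graph n := relabel_edge @: G.

Lemma relabel_edge_inj : injective relabel_edge.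
Proof. by move=> e1 e2 /(congr1 val) /(imset_inj s_inj) /val_inj. Qed.

Lemma relabel_inj : injective relabel.
Proof. exact/imset_inj/relabel_edge_inj. Qed.

Lemma card_relabel G : #|relabel G| = #|G|.
Proof. exact/card_imset/relabel_edge_inj. Qed.

Lemma relabel_gsum G1 G2 : relabel (gsum G1 G2) = gsum (relabel G1) (relabel G2).
Proof.
apply/setP=> e; rewrite !inE.
have [/imsetP[e' _ ->] | e_out] := boolP (e \in relabel_edge @: setT).
  by rewrite !(mem_imset _ _ relabel_edge_inj) !inE.
have e_notin G : e \notin relabel G.
  by apply: contra e_out; apply/subsetP/imsetS/subsetT.
by rewrite !(negbTE (e_notin _)).
Qed.

Lemma adj_relabel G x y : adj (relabel G) (s x) (s y) = adj G x y.
Proof.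
apply/adjP/adjP => [[_ /imsetP[e eG ->] /= he] | [e eG he]].
  by exists e => //; apply: (imset_inj s_inj); rewrite he imset_set2.
by exists (relabel_edge e); [exact: imset_f | rewrite /= he imset_set2].
Qed.

Lemma vtx_relabel G : vtx (relabel G) = s @: vtx G.
Proof.
apply/setP=> y; apply/bigcupP/imsetP => [[_ /imsetP[e eG ->] /imsetP[x xe ->]] | [x]].
  by exists x => //; apply/bigcupP; exists e.
move=> /bigcupP[e eG xe] ->.
by exists (relabel_edge e); [exact: imset_f | exact: imset_f].
Qed.

Lemma giso_relabel (d : 'I_m) k G (H : graph k) : giso G H -> giso (relabel G) H.
Proof.
move=> [f [f_inj [f_vtx f_adj]]].
pose s_inv (y : 'I_n) := odflt d [pick i | s i == y].
have s_invK : cancel s s_inv.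
  by move=> i; rewrite /s_inv; case: pickP => [j /eqP /s_inj | /(_ i)] //; rewrite eqxx.
exists (f \o s_inv); rewrite vtx_relabel; split; [|split].
- by move=> _ _ /imsetP[x xG ->] /imsetP[y yG ->] /=; rewrite !s_invK => /f_inj ->.
- by rewrite -imset_comp -f_vtx; apply: eq_imset => x /=; rewrite s_invK.
- by move=> _ _ /imsetP[x xG ->] /imsetP[y yG ->] /=; rewrite adj_relabel !s_invK f_adj.
Qed.

End Relabel.

Lemma homogeneous_embedding m n (xi : graph n) : (4 ^ m <= n)%N ->
  exists s : 'I_m -> 'I_n, injective s /\
    ((forall i j, i != j -> adj xi (s i) (s j)) \/
     (forall i j, i != j -> ~~ adj xi (s i) (s j))).
Proof.
move=> mn; have adjC : symmetric (adj xi).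
  by move=> x y; apply: eq_existsb => e; rewrite setUC.
have hA : (2 ^ (m + m) <= #|[set: 'I_n]|)%N by rewrite cardsT card_ord addnn -mul2n expnM.
have [S _ hS] := ramsey_homogeneous adjC (erefl (m + m)) hA.
have [cardS homS] : #|S| = m /\ (clique (adj xi) S \/ clique [rel x y | ~~ adj xi x y] S).
  by case: hS => [[-> ?] | [-> ?]]; split=> //; [left | right].
pose s (i : 'I_m) : 'I_n := enum_val (cast_ord (esym cardS) i).
have s_inj : injective s by move=> i j /enum_val_inj /cast_ord_inj.
have s_hom r : clique r S -> forall i j, i != j -> r (s i) (s j).
  by move=> Sr i j ij; apply: Sr; rewrite ?enum_valP // (inj_eq s_inj).
by exists s; split => //; case: homS => /s_hom; [left | right].
Qed.

Definition parity_double m (e0 : graph m) (C : {set graph m}) :=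
  C :|: [set gsum c e0 | c in C].

Lemma card_parity_double m (e0 : graph m) (C : {set graph m}) : odd #|e0| ->
  {in C, forall c : graph m, ~~ odd #|c|} -> #|parity_double e0 C| = (2 * #|C|)%N.
Proof.
move=> oe0 Ceven.
have disj : C :&: [set gsum c e0 | c in C] = set0.
  apply/setP=> g; rewrite !inE; apply/negbTE/andP => -[gC /imsetP[c cC gE]].
  by move: (Ceven g gC); rewrite gE odd_gsum (negbTE (Ceven c cC)) oe0.
rewrite cardsU disj cards0 card_imset; last exact: gsum_inj.
by rewrite subn0 addnn mul2n.
Qed.

Definition even_graphs m := [set g : graph m | ~~ odd #|g|].

Lemma card_even_graphs m (e0 : graph m) :
  odd #|e0| -> #|{: graph m}| = (2 * #|even_graphs m|)%N.
Proof.
move=> oe0; rewrite -(card_parity_double oe0); last by move=> g; rewrite inE.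
apply: eq_card => g; rewrite !inE; symmetry.
have [og | //] := boolP (odd #|g|).
apply/imsetP; exists (gsum g e0); last by rewrite gsumK.
by rewrite inE odd_gsum og oe0.
Qed.

Section Codes.
Variable Hc : gcoll.
Arguments Hc : clear implicits.
Hypothesis Hc_even : forall k (H : graph k), Hc k H -> ~~ odd #|H|.

Lemma is_code_sub n (C D : {set graph n}) : C \subset D -> is_code Hc D -> is_code Hc C.
Proof. by move=> /subsetP CD code g1 g2 /CD g1D /CD g2D; apply: code. Qed.

Lemma giso_odd n (G : graph n) : odd #|G| -> forall k (H : graph k), Hc k H -> ~ giso G H.
Proof. by move=> oG k H /Hc_even + /giso_card eGH; rewrite -eGH oG. Qed.

Lemma code_relabel_preim m n (s : 'I_m -> 'I_n) (s_inj : injective s) (d : 'I_m)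
    (Gs : {set graph n}) (x : graph n) :
  is_code Hc Gs -> is_code Hc [set g | gsum x (relabel s_inj g) \in Gs].
Proof.
move=> code g1 g2; rewrite !inE => g1G g2G k H HcH g12H.
apply: (code _ _ g1G g2G k H HcH).
rewrite gsumKC -relabel_gsum; exact (giso_relabel s_inj d g12H).
Qed.

Lemma code_parity_double m (e0 : graph m) (C : {set graph m}) : odd #|e0| ->
  {in C, forall c : graph m, ~~ odd #|c|} -> is_code Hc C -> is_code Hc (parity_double e0 C).
Proof.
move=> oe0 Ceven code g1 g2.
have odd_shift c : c \in C -> odd #|gsum c e0|.
  by move=> cC; rewrite odd_gsum (negbTE (Ceven c cC)) oe0.
rewrite !inE => /orP[g1C | /imsetP[c1 c1C ->]] /orP[g2C | /imsetP[c2 c2C ->]].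
- exact: code.
- by apply: giso_odd; rewrite odd_gsum (negbTE (Ceven _ g1C)) odd_shift.
- by apply: giso_odd; rewrite odd_gsum (negbTE (Ceven _ g2C)) odd_shift.
- by rewrite ![gsum _ e0]gsumC gsumKC; exact: code.
Qed.

End Codes.

Local Open Scope ring_scope.

Lemma code_card_le_delta (Hc : gcoll) m (C : {set graph m}) :
  is_code Hc C -> #|C|%:R <= delta Hc m * #|{: graph m}|%:R.
Proof.
move=> code; rewrite /delta divfK ?ler_nat; first exact: leq_bigmax_cond (asboolT code).
by rewrite pnatr_eq0 -lt0n; apply/card_gt0P; exists set0.
Qed.

Definition chi n (xi x : graph n) : rat := (-1) ^+ #|x :&: xi|.

Lemma chi0 n (x : graph n) : chi set0 x = 1.
Proof. by rewrite /chi setI0 cards0. Qed.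

Lemma chi_gsum n (xi x y : graph n) : chi xi (gsum x y) = chi xi x * chi xi y.
Proof.
rewrite /chi; have -> : gsum x y :&: xi = gsum (x :&: xi) (y :&: xi).
  by apply/setP=> e; rewrite !inE; case: (e \in x); case: (e \in y); case: (e \in xi).
by rewrite -signr_odd odd_gsum signr_addb !signr_odd.
Qed.

Lemma norm_chi n (xi x : graph n) : `|chi xi x| = 1.
Proof. by rewrite normrX normrN1 expr1n. Qed.

Lemma sum_chi_eq0 n (xi : graph n) : xi != set0 -> \sum_x chi xi x = 0.
Proof.
case/set0Pn=> e e_xi; set S := \sum_x _.
have chi_e : chi xi [set e] = -1.
  by rewrite /chi (setIidPl _) ?cards1 ?sub1set.
suff : S = - S by lra.
rewrite {1}/S (reindex_inj (@gsum_inj n [set e])) -sumrN.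
by apply: eq_bigr => x _; rewrite chi_gsum chi_e mulrN1.
Qed.

Lemma sum_indicator (T : finType) (A : {set T}) : \sum_x (x \in A)%:R = #|A|%:R :> rat.
Proof.
by rewrite -sum1_card natr_sum [RHS]big_mkcond; apply: eq_bigr => x _; case: (x \in A).
Qed.

Section Fibers.
Variables (n : nat) (Gs U : {set graph n}).

Definition fiber (x : graph n) := [set u in U | gsum x u \in Gs].

Lemma sum_chi_fiber (xi : graph n) : {in U, forall u, chi xi u = 1} ->
  \sum_x chi xi x * #|fiber x|%:R = #|U|%:R * \sum_x (x \in Gs)%:R * chi xi x.
Proof.
move=> chiU.
have card_fiber x : #|fiber x|%:R = \sum_(u in U) (gsum x u \in Gs)%:R :> rat.
  rewrite -sum1_card natr_sum big_mkcond [RHS]big_mkcond; apply: eq_bigr => u _.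
  by rewrite !inE; case: (u \in U); case: (_ \in Gs).
under eq_bigr do rewrite card_fiber mulr_sumr.
rewrite exchange_big /= mulr_natl -sumr_const; apply: eq_bigr => u uU.
rewrite (reindex_inj (@gsum_inj n u)); apply: eq_bigr => x _ /=.
by rewrite gsumK chi_gsum (chiU u uU) mulr1 mulrC.
Qed.

Lemma sum_card_fiber : \sum_x #|fiber x|%:R = #|U|%:R * #|Gs|%:R :> rat.
Proof.
have := sum_chi_fiber (xi := set0) (fun u _ => chi0 u).
under eq_bigr do rewrite chi0 mul1r.
by under [in RHS]eq_bigr do rewrite chi0 mulr1; rewrite sum_indicator.
Qed.

Lemma abs_sum_chi_le (xi : graph n) (beta : rat) :
  xi != set0 -> U != set0 -> {in U, forall u, chi xi u = 1} ->
  (forall x, #|fiber x|%:R <= beta * #|U|%:R) ->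
  `|\sum_x (x \in Gs)%:R * chi xi x| <= beta * #|{: graph n}|%:R - #|Gs|%:R.
Proof.
move=> xi0 U0 chiU fiber_le; set S := \sum_x _.
have U_gt0 : 0 < #|U|%:R :> rat by rewrite ltr0n card_gt0.
(* Weight the fibre bound by [1 + eps * chi xi x >= 0] and sum over x. *)
have weighted eps : `|eps| = 1 -> #|Gs|%:R + eps * S <= beta * #|{: graph n}|%:R.
  move=> eps1; have c_ge0 x : 0 <= 1 + eps * chi xi x.
    have : `|eps * chi xi x| <= 1 by rewrite normrM eps1 norm_chi mul1r.
    by rewrite ler_norml => /andP[? _]; lra.
  rewrite -(ler_pM2l U_gt0) mulrDr -sum_card_fiber mulrCA -sum_chi_fiber //.
  rewrite mulr_sumr -big_split /=.
  under eq_bigr do rewrite mulrA -{1}[#|fiber _|%:R]mul1r -mulrDl.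
  apply: le_trans (ler_sum _ (fun x _ => ler_wpM2l (c_ge0 x) (fiber_le x))) _.
  rewrite -mulr_suml big_split /= -mulr_sumr sum_chi_eq0 // mulr0 addr0 sumr_const.
  by rewrite mulrCA [X in _ <= X]mulrCA [#|U|%:R * _]mulrC.
have := weighted 1 (normr1 _); have := weighted (-1) (normrN1 _).
by rewrite ler_norml; lra.
Qed.
End Fibers.

Section RelabelCharacter.
Variables (m n : nat) (s : 'I_m -> 'I_n) (s_inj : injective s) (xi : graph n).

Lemma chi_relabel_indep g : (forall i j, i != j -> ~~ adj xi (s i) (s j)) ->
  chi xi (relabel s_inj g) = 1.
Proof.
move=> indep; rewrite /chi (_ : _ :&: xi = set0) ?cards0 //.
apply/setP=> e; rewrite !inE; apply/negbTE/andP => -[/imsetP[e' _ ->] e_xi].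
have [i [j [ij e'ij]]] := edge_pair e'.
case/negP: (indep i j ij); apply/adjP.
by exists (relabel_edge s_inj e'); rewrite //= e'ij imset_set2.
Qed.

Lemma chi_relabel_clique g : (forall i j, i != j -> adj xi (s i) (s j)) ->
  chi xi (relabel s_inj g) = (-1) ^+ #|g|.
Proof.
move=> cl; rewrite /chi (setIidPl _) ?card_relabel //.
apply/subsetP=> _ /imsetP[e _ ->]; have [i [j [ij eij]]] := edge_pair e.
have /adjP[e' e'xi e'ij] := cl i j ij; suff -> : relabel_edge s_inj e = e' by [].
by apply: val_inj; rewrite /= eij e'ij imset_set2.
Qed.

Lemma card_fiber_relabel (Gs : {set graph n}) (W : {set graph m}) x :
  #|fiber Gs (relabel s_inj @: W) x| = #|W :&: [set g | gsum x (relabel s_inj g) \in Gs]|.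
Proof.
rewrite -(card_imset _ (relabel_inj (s_inj := s_inj))); apply: eq_card => u; rewrite !inE.
apply/andP/imsetP => [[/imsetP[g gW ->] gG] | [g]]; first by exists g; rewrite // !inE gW.
by rewrite !inE => /andP[gW gG] ->; rewrite imset_f.
Qed.

End RelabelCharacter.

Lemma abs_sum_chi_code_le (Hc : gcoll) n m (Gs : {set graph n}) (xi : graph n) :
  (forall k (H : graph k), Hc k H -> ~~ odd #|H|) -> (2 <= m)%N -> (4 ^ m <= n)%N ->
  is_code Hc Gs -> xi != set0 ->
  `|\sum_x (x \in Gs)%:R * chi xi x| <= delta Hc m * #|{: graph n}|%:R - #|Gs|%:R.
Proof.
move=> Hc_even m2 mn code xi0.
have [s [s_inj hom]] := homogeneous_embedding xi mn.
pose i0 : 'I_m := Ordinal (ltnW m2).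
pose preim x := [set g | gsum x (relabel s_inj g) \in Gs].
have preim_code x : is_code Hc (preim x) := code_relabel_preim i0 code.
suff [W [W0 chiW hW]] : exists W : {set graph m}, [/\ set0 \in W,
    {in W, forall g, chi xi (relabel s_inj g) = 1} &
    forall x, #|W :&: preim x|%:R <= delta Hc m * #|W|%:R].
  apply: (abs_sum_chi_le (U := relabel s_inj @: W)) => //.
  - by apply/set0Pn; exists (relabel s_inj set0); exact: imset_f.
  - by move=> _ /imsetP[g gW ->]; exact: chiW.
  - move=> x; rewrite card_fiber_relabel (card_imset _ (relabel_inj (s_inj := s_inj))).
    exact: hW.
case: hom => [cl | indep]; last first.
  exists setT; split=> [|g _|x]; first by rewrite inE.
  - exact: chi_relabel_indep.
  - by rewrite setTI cardsT; apply: code_card_le_delta.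
have [e0 odd_e0] := exists_odd_graph m2.
exists (even_graphs m); split=> [|g|x]; rewrite ?inE ?cards0 //.
  by move=> g_even; rewrite chi_relabel_clique // -signr_odd (negbTE g_even).
have even_sub : {in even_graphs m :&: preim x, forall c : graph m, ~~ odd #|c|}.
  by move=> c; rewrite !inE => /andP[].
have := code_card_le_delta (code_parity_double Hc_even odd_e0 even_sub
  (is_code_sub (subsetIr _ _) (preim_code x))).
rewrite card_parity_double // (card_even_graphs odd_e0) !natrM mulrCA ler_pM2l //.
Qed.

Lemma fourier_centered_indicator n (Gs : {set graph n}) (xi : graph n) :
  fourier (fun G => (G \in Gs)%:R - density Gs) xi =
  (\sum_x (x \in Gs)%:R * chi xi x - density Gs * \sum_x chi xi x) / #|{: graph n}|%:R.
Proof.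
rewrite /fourier mulr_sumr -sumrB; congr (_ / _).
by apply: eq_bigr => x _; rewrite mulrBl.
Qed.

Theorem lemma3p4 (Hc : gcoll) (n m : nat) (Gs : {set graph n}) :
  (forall k (H : graph k), Hc k H -> H != set0 /\ ~~ odd #|H|) ->
  (2 <= m)%N -> (2 <= n)%N -> (4 ^ m <= n)%N ->
  is_code Hc Gs -> density Gs = delta Hc n ->
  linf (fourier (fun G => (G \in Gs)%:R - density Gs))
    <= delta Hc m - delta Hc n.
Proof.
move=> Hc_ok m2 n2 mn code dens.
(* Only the parity of the members of [Hc] matters, not that they are nonempty. *)
have Hc_even k (H : graph k) (HcH : Hc k H) : ~~ odd #|H| := (Hc_ok k H HcH).2.
have N_gt0 : 0 < #|{: graph n}|%:R :> rat by rewrite ltr0n; apply/card_gt0P; exists set0.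
have coeff_le xi : xi != set0 ->
    `|fourier (fun G => (G \in Gs)%:R - density Gs) xi| <= delta Hc m - delta Hc n.
  move=> xi0; rewrite fourier_centered_indicator sum_chi_eq0 // mulr0 subr0 normrM normfV.
  rewrite (gtr0_norm N_gt0) ler_pdivrMr // mulrBl -dens /density divfK ?gt_eqF //.
  exact: abs_sum_chi_code_le.
have [e0 odd_e0] := exists_odd_graph n2.
have e0_ne0 : e0 != set0 by apply: contraTneq odd_e0 => ->; rewrite cards0.
have delta_ge : 0 <= delta Hc m - delta Hc n := le_trans (normr_ge0 _) (coeff_le _ e0_ne0).
rewrite /linf; apply: Order.POrderTheory.bigmax_le => // xi _.
have [-> | xi0] := eqVneq xi set0; last exact: coeff_le.
rewrite fourier_centered_indicator.
under eq_bigr do rewrite chi0 mulr1.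
under [\sum_x chi _ _]eq_bigr do rewrite chi0.
by rewrite sum_indicator sumr_const /density mulfVK ?gt_eqF // subrr mul0r normr0.
Qed.
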